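(* Let $n,p$ be positive integers, $X\in\mathbb{R}^{n\times p}$, $\mathbf y\in\mathbb{R}^n$, $\delta>0$ and $\lambda>0$. The function \[ f_\lambda(\mathbf t)=\frac1n\|\mathbf y-X_{\mathbf t}\widetilde{\boldsymbol\beta}_{\mathbf t}\|_2^2+\lambda\sum_{j=1}^p t_j,\qquad \mathbf t\in[0,1]^p, \] is continuous over $[0,1]^p$ in the sense that for any sequence $\mathbf t^{(1)},\mathbf t^{(2)},\dots\in[0,1)^p$ converging to some $\mathbf t\in[0,1]^p$, the limit $\lim_{l\to\infty}f_\lambda(\mathbf t^{(l)})$ exists and equals $f_\lambda(\mathbf t)$.
   Context: For $\mathbf t\in[0,1]^p$, $T_{\mathbf t}=\mathrm{Diag}(t_1,\dots,t_p)$, $X_{\mathbf t}=XT_{\mathbf t}$, $L_{\mathbf t}=\frac1n[X_{\mathbf t}^\top X_{\mathbf t}+\delta(I-T_{\mathbf t}^2)]$ with $I$ the $p\times p$ identity, and $\widetilde{\boldsymbol\beta}_{\mathbf t}:=L_{\mathbf t}^{+}\left(X_{\mathbf t}^\top\mathbf y/n\right)$ with $L_{\mathbf t}^+$ the Moore–Penrose pseudo-inverse of $L_{\mathbf t}$. *)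

From HB Require Import structures.
From mathcomp Require Import all_boot all_order all_algebra.
From mathcomp Require Import all_classical all_reals all_analysis.
Set Implicit Arguments. Unset Strict Implicit. Unset Printing Implicit Defensive.
Import Order.TTheory GRing.Theory Num.Theory.
Local Open Scope ring_scope.
Local Open Scope classical_set_scope.

Section Defs.
Variables (R : realType) (p : nat).

Definition is_MP_pinv (A B : 'M[R]_p) : Prop :=
  [/\ A *m B *m A = A, B *m A *m B = B,
      (A *m B)^T = A *m B & (B *m A)^T = B *m A].

(* The Moore--Penrose pseudo-inverse (it exists and is unique). *)
Definition MP_pinv (A : 'M[R]_p) : 'M[R]_p := xget 0 (is_MP_pinv A).
End Defs.

Section Model.
Variables (R : realType) (n p : nat).
Variables (X : 'M[R]_(n, p)) (y : 'cV[R]_n) (delta lambda : R).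

Definition Tmat (t : 'rV[R]_p) : 'M[R]_p := diag_mx t.
Definition Xt (t : 'rV[R]_p) : 'M[R]_(n, p) := X *m Tmat t.
Definition Lt (t : 'rV[R]_p) : 'M[R]_p :=
  (n%:R)^-1 *: ((Xt t)^T *m Xt t + delta *: (1%:M - Tmat t *m Tmat t)).
Definition beta_t (t : 'rV[R]_p) : 'cV[R]_p :=
  MP_pinv (Lt t) *m ((n%:R)^-1 *: ((Xt t)^T *m y)).
Definition sqnorm2 m (v : 'cV[R]_m) : R := \sum_(i < m) (v i 0) ^+ 2.
Definition f_lambda (t : 'rV[R]_p) : R :=
  (n%:R)^-1 * sqnorm2 (y - Xt t *m beta_t t) + lambda * \sum_(j < p) t 0 j.
End Model.

(* Write u_t = T_t beta_t and r_t = y - X u_t, so that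
   f_lambda(t) = |r_t|^2 / n + lambda sum_j t_j and only continuity of r_t is at stake.
   With weights a_j = s_j^2 and b_j = delta (1 - s_j^2), the vector u_s solves the
   weighted ridge problem P_s(u) = |y - X u|^2 + sum_j b_j u_j^2 / a_j, whose dual is
   D_s(r) = 2 <y, r> - |r|^2 - sum_j a_j (X^T r)_j^2 / b_j.  Coordinatewise AM-GM gives
   |y - X u - r|^2 <= P_s(u) - D_s(r), and the normal equations give P_s(u_s) = D_s(r_s),
   also on the boundary of [0,1]^p.  Hence |r_s - r_t|^2 <= P_s(u_t) - D_s(r_t): this gap
   is continuous in s at t, because u_t vanishes where t_j = 0 and X^T r_t vanishes where
   t_j = 1, and it is zero at s = t. *)

From mathcomp Require Import all_boot all_order all_algebra.
From mathcomp Require Import all_classical all_reals all_analysis.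
From mathcomp Require Import ring.
Import Order.TTheory GRing.Theory Num.Theory.
Import numFieldNormedType.Exports.
Local Open Scope ring_scope.
Local Open Scope classical_set_scope.

Set Implicit Arguments.
Unset Strict Implicit.

Section SymmetricWeakInverse.
Variable R : realFieldType.

Lemma trmx_mul_self_eq0 m k (M : 'M[R]_(m, k)) : M^T *m M = 0 -> M = 0.
Proof.
move=> MM0; apply/matrixP => i j; rewrite mxE.
have /eqP := congr1 (fun N : 'M[R]_k => N j j) MM0; rewrite !mxE.
rewrite psumr_eq0; last by move=> l _; rewrite mxE -expr2 sqr_ge0.
move=> /allP /(_ i (mem_index_enum _)) /implyP /(_ isT).
by rewrite mxE -expr2 sqrf_eq0 => /eqP.
Qed.

Lemma sym_mulmx_self_eq0 p m (A : 'M[R]_p) (M : 'M[R]_(p, m)) :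
  A^T = A -> A *m (A *m M) = 0 -> A *m M = 0.
Proof.
by move=> symA AAM0; apply: trmx_mul_self_eq0; rewrite trmx_mul symA -mulmxA AAM0 mulmx0.
Qed.

Lemma horner_mx_sym p (A : 'M[R]_p.+1) (q : {poly R}) :
  A^T = A -> (horner_mx A q)^T = horner_mx A q.
Proof.
move=> symA; elim/poly_ind: q => [|q c IHq]; first by rewrite rmorph0 trmx0.
rewrite rmorphD rmorphM /= horner_mx_X horner_mx_C linearD /= tr_scalar_mx.
by rewrite -!mulmxE trmx_mul IHq symA (comm_mx_horner q (erefl (A *m A))).
Qed.

(* If [A h(A) = 0] with [h = q X + c], then either [c != 0] and [-c^-1 q(A)]
   works, or [c = 0], [A^2 q(A) = 0], hence [A q(A) = 0] by symmetry. *)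
Lemma sym_mx_poly_weak_inverse p (A : 'M[R]_p.+1) (h : {poly R}) :
  A^T = A -> h != 0 -> A * horner_mx A h = 0 ->
  exists S : 'M[R]_p.+1, [/\ S^T = S, A * S = S * A & A * A * S = A].
Proof.
move=> symA; elim/poly_ind: h => [|q c IHq] hnz; first by rewrite eqxx in hnz.
have cAq : A * horner_mx A q = horner_mx A q * A.
  by have := comm_mx_horner q (erefl (A *m A)); rewrite /comm_mx !mulmxE.
have [c0 | cnz] := eqVneq c 0.
  rewrite c0 polyC0 addr0 rmorphM /= horner_mx_X -cAq => AAq0; apply: IHq.
    by apply: contraNneq hnz => ->; rewrite c0 mul0r polyC0 addr0.
  by rewrite -mulmxE sym_mulmx_self_eq0 // mulmxE.
rewrite rmorphD rmorphM /= horner_mx_X horner_mx_C mulrDr -cAq mulrA.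
rewrite -!mulmxE mul_mx_scalar !mulmxE => /eqP; rewrite addr_eq0 => /eqP AAq.
exists (- c^-1 *: horner_mx A q); split.
- by rewrite linearZ /= horner_mx_sym.
- by rewrite -scalerAr -scalerAl cAq.
- by rewrite -scalerAr AAq scalerN scaleNr opprK scalerA mulVf // scale1r.
Qed.

Lemma sym_mx_weak_inverse p (A : 'M[R]_p.+1) : A^T = A ->
  exists S : 'M[R]_p.+1, [/\ S^T = S, A * S = S * A & A * A * S = A].
Proof.
move=> symA; apply: (sym_mx_poly_weak_inverse (h := char_poly A) symA).
  exact/monic_neq0/char_poly_monic.
by rewrite Cayley_Hamilton mulr0.
Qed.

End SymmetricWeakInverse.

Section SymmetricPseudoInverse.
Variable R : realType.

Lemma sym_MP_pinv_exists p (A : 'M[R]_p) : A^T = A -> exists B, is_MP_pinv A B.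
Proof.
case: p A => [|p] A symA.
  by exists 0; split; apply/matrixP => -[].
have [S [symS cAS AAS]] := sym_mx_weak_inverse symA.
have ASA : A * S * A = A by rewrite -mulrA -cAS mulrA.
have SASA : S * A * S * A = S * A by rewrite -!mulrA (mulrA A S A) ASA.
have ASAS : A * (S * A * S) = A * S by rewrite !mulrA ASA.
exists (S * A * S); split; rewrite !mulmxE.
- by rewrite !mulrA !ASA.
- by rewrite !mulrA !SASA.
- by rewrite ASAS -mulmxE trmx_mul symS symA mulmxE cAS.
- by rewrite SASA -mulmxE trmx_mul symS symA mulmxE cAS.
Qed.

Lemma MP_pinvP p (A : 'M[R]_p) : A^T = A -> is_MP_pinv A (MP_pinv A).
Proof. by move/sym_MP_pinv_exists/(xgetPex 0). Qed.

(* [w = c - A A^+ c] lies in [ker A], hence in [ker K], so it is orthogonal to [c] and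
   to [A A^+ c], hence to itself. *)
Lemma mulmx_MP_pinv_tr p m (A : 'M[R]_p) (K : 'M[R]_(m, p)) (v : 'cV[R]_m) :
  A^T = A -> (forall w : 'cV_p, A *m w = 0 -> K *m w = 0) ->
  A *m (MP_pinv A *m (K^T *m v)) = K^T *m v.
Proof.
move=> symA kerAK; have [ABA _ AB_sym _] := MP_pinvP symA.
set B := MP_pinv A; set c := K^T *m v; set w := c - A *m (B *m c).
have wA : w^T *m A = 0.
  rewrite /w linearB /= mulmxBl [(A *m _)^T]trmx_mul [(B *m c)^T]trmx_mul.
  by rewrite -(mulmxA c^T) -trmx_mul AB_sym -mulmxA ABA subrr.
have Aw : A *m w = 0 by apply: trmx_inj; rewrite trmx_mul symA wA trmx0.
have wc : w^T *m c = 0.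
  by rewrite /c mulmxA -trmx_mul kerAK // trmx0 mul0mx.
have ww : w^T *m w = 0.
  by rewrite {2}/w mulmxBr wc (mulmxA w^T A) wA mul0mx subrr.
by move/trmx_mul_self_eq0/eqP: ww; rewrite subr_eq0 => /eqP <-.
Qed.

End SymmetricPseudoInverse.

Lemma weighted_amgm (R : realFieldType) (a b u c : R) :
  0 <= a -> 0 < b -> (a = 0 -> u = 0) ->
  2 * (u * c) <= b * u ^+ 2 / a + a * c ^+ 2 / b.
Proof.
move=> a_ge0 b_gt0 a0_u0; have [a0 | a_neq0] := eqVneq a 0.
  by rewrite a0_u0 // a0 !(expr2, mul0r, mulr0, add0r).
rewrite -subr_ge0.
have -> : b * u ^+ 2 / a + a * c ^+ 2 / b - 2 * (u * c) =
          (b * u - a * c) ^+ 2 / (a * b).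
  by field; rewrite gt_eqF // a_neq0.
by apply: divr_ge0; [exact: sqr_ge0 | apply: mulr_ge0; last exact: ltW].
Qed.

Lemma weighted_amgm_eq (R : fieldType) (a b u c : R) :
  (a != 0) || (b != 0) -> b * u = a * c ->
  b * u ^+ 2 / a + a * c ^+ 2 / b = 2 * (u * c).
Proof.
move=> ab_neq0 bu_ac; have [a0 | a_neq0] := eqVneq a 0.
  rewrite a0 eqxx /= in ab_neq0.
  have u0 : u = 0 by apply: (mulfI ab_neq0); rewrite bu_ac a0 !mul0r mulr0.
  by rewrite a0 u0 !(expr2, mul0r, mulr0, add0r).
have [b0 | b_neq0] := eqVneq b 0.
  have c0 : c = 0 by apply: (mulfI a_neq0); rewrite -bu_ac b0 !mul0r mulr0.
  by rewrite b0 c0 !(expr2, mul0r, mulr0, add0r).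
have -> : c = b * u / a by rewrite bu_ac mulrC mulKf.
by field; rewrite a_neq0 b_neq0.
Qed.

Section SquaredNorm.
Variable R : realType.

Definition vdot m (u v : 'cV[R]_m) : R := \sum_(i < m) u i 0 * v i 0.

Lemma sqnorm2_ge0 m (v : 'cV[R]_m) : 0 <= sqnorm2 v.
Proof. by apply: sumr_ge0 => i _; apply: sqr_ge0. Qed.

Lemma sqnorm2B m (u v : 'cV[R]_m) :
  sqnorm2 (u - v) = sqnorm2 u - 2 * vdot u v + sqnorm2 v.
Proof.
rewrite /sqnorm2 /vdot mulr_sumr -sumrB -big_split /=.
by apply: eq_bigr => i _; rewrite !mxE; ring.
Qed.

Lemma vdotBl m (u v w : 'cV[R]_m) : vdot (u - v) w = vdot u w - vdot v w.
Proof. by rewrite /vdot -sumrB; apply: eq_bigr => i _; rewrite !mxE mulrBl. Qed.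

Lemma vdot_mulmxl m k (A : 'M[R]_(m, k)) (u : 'cV[R]_k) (v : 'cV[R]_m) :
  vdot (A *m u) v = \sum_(j < k) u j 0 * (A^T *m v) j 0.
Proof.
rewrite /vdot; under eq_bigr do rewrite mxE mulr_suml.
rewrite exchange_big /=; apply: eq_bigr => j _.
by rewrite mxE mulr_sumr; apply: eq_bigr => i _; rewrite !mxE mulrCA mulrA.
Qed.

End SquaredNorm.

Section Duality.
Variables (R : realType) (n p : nat) (X : 'M[R]_(n, p)) (y : 'cV[R]_n).
Variables (a b : 'I_p -> R).

(* A coordinate with [a j = 0] (resp. [b j = 0]) contributes [0] to [primal] (resp.
   [dual]) since [x / 0 = 0]; it stands for the constraint [u j 0 = 0]
   (resp. [(X^T *m r) j 0 = 0]), which the lemmas below assume separately. *)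
Definition primal (u : 'cV[R]_p) : R :=
  sqnorm2 (y - X *m u) + \sum_(j < p) b j * u j 0 ^+ 2 / a j.

Definition dual (r : 'cV[R]_n) : R :=
  2 * vdot y r - sqnorm2 r - \sum_(j < p) a j * (X^T *m r) j 0 ^+ 2 / b j.

Lemma primal_sub_dual (u : 'cV[R]_p) (r : 'cV[R]_n) :
  primal u - dual r = sqnorm2 (y - X *m u - r) +
    \sum_(j < p) (b j * u j 0 ^+ 2 / a j + a j * (X^T *m r) j 0 ^+ 2 / b j
                  - 2 * (u j 0 * (X^T *m r) j 0)).
Proof.
rewrite /primal /dual sqnorm2B vdotBl vdot_mulmxl !sumrB big_split /=.
by rewrite -mulr_sumr; ring.
Qed.

Lemma weak_duality (u : 'cV[R]_p) (r : 'cV[R]_n) :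
  (forall j, 0 <= a j) -> (forall j, 0 < b j) -> (forall j, a j = 0 -> u j 0 = 0) ->
  sqnorm2 (y - X *m u - r) <= primal u - dual r.
Proof.
move=> a_ge0 b_gt0 a0_u0; rewrite primal_sub_dual lerDl.
by apply: sumr_ge0 => j _; rewrite subr_ge0; apply: weighted_amgm; auto.
Qed.

Lemma strong_duality (u : 'cV[R]_p) :
  (forall j, (a j != 0) || (b j != 0)) ->
  (forall j, b j * u j 0 = a j * (X^T *m (y - X *m u)) j 0) ->
  primal u = dual (y - X *m u).
Proof.
move=> ab_neq0 stat; apply/eqP; rewrite -subr_eq0 primal_sub_dual subrr.
rewrite /sqnorm2 !big1 ?addr0 // => j _; last by rewrite mxE expr2 mulr0.
by rewrite weighted_amgm_eq ?subrr.
Qed.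

End Duality.

Section Limits.
Variables (R : realFieldType) (T : Type) (F : set_system T).
Hypothesis FF : Filter F.

Lemma cvg_sum_ord k (f : 'I_k -> T -> R) (l : 'I_k -> R) :
  (forall i, f i x @[x --> F] --> l i) ->
  \sum_(i < k) f i x @[x --> F] --> \sum_(i < k) l i.
Proof. by move=> cvg_f; apply: cvg_big => //; exact: add_continuous. Qed.

Lemma cvg_sqr (f : T -> R) (l : R) :
  f x @[x --> F] --> l -> f x ^+ 2 @[x --> F] --> l ^+ 2.
Proof. by move=> cvg_f; rewrite expr2; under eq_fun do rewrite expr2; exact: cvgM. Qed.

Lemma sqr_cvg0 (f : T -> R) : f x ^+ 2 @[x --> F] --> 0 -> f x @[x --> F] --> 0.
Proof.
move=> /cvgr0Pnorm_lt cvg_f2; apply/cvgr0Pnorm_lt => e e_gt0.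
near=> x; have : `|f x ^+ 2| < e * e by near: x; exact: cvg_f2 (mulr_gt0 e_gt0 e_gt0).
by rewrite normrX -expr2 ltr_pXn2r // nnegrE ?normr_ge0 // ltW.
Unshelve. all: by end_near. Qed.

(* If [b = 0] then [w = 0] and both sides vanish, using [x / 0 = 0]. *)
Lemma cvg_mul_div (f g : T -> R) (a b w : R) :
  f x @[x --> F] --> a -> g x @[x --> F] --> b -> (b = 0 -> w = 0) ->
  f x * w / g x @[x --> F] --> a * w / b.
Proof.
move=> cvg_f cvg_g b0_w0; have [-> | w_neq0] := eqVneq w 0.
  by rewrite mulr0 mul0r; under eq_fun do rewrite mulr0 mul0r; exact: cvg_cst.
apply: cvgM; first by apply: cvgMr_tmp.
by apply: cvgV => //; apply: contra_neq w_neq0.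
Qed.

End Limits.

Lemma cvg_sqnorm2 (R : realType) (T : Type) (F : set_system T) (FF : Filter F)
    m (v : T -> 'cV[R]_m) (v0 : 'cV[R]_m) :
  sqnorm2 (v x - v0) @[x --> F] --> 0 -> sqnorm2 (v x) @[x --> F] --> sqnorm2 v0.
Proof.
move=> cvg_d; apply: cvg_sum_ord => i; apply: cvg_sqr.
have cvg_di : (v x - v0) i 0 @[x --> F] --> 0.
  apply: sqr_cvg0; apply: (squeeze_cvgr _ (cvg_cst 0) cvg_d).
  apply: nearW => x; rewrite sqr_ge0 /= /sqnorm2 (bigD1 i) //= lerDl.
  by apply: sumr_ge0 => k _; exact: sqr_ge0.
have -> : (fun x => v x i 0) = (fun x => (v x - v0) i 0 + v0 i 0).
  by apply: funext => x; rewrite !mxE subrK.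
by rewrite -[X in _ --> X]add0r; apply: cvgD => //; exact: cvg_cst.
Qed.

Section DualityLimits.
Variables (R : realType) (n p : nat) (X : 'M[R]_(n, p)) (y : 'cV[R]_n).
Variables (T : Type) (F : set_system T).
Hypothesis FF : Filter F.
Variables (a_ b_ : T -> 'I_p -> R) (a b : 'I_p -> R).
Hypotheses (cvg_a : forall j, a_ x j @[x --> F] --> a j)
           (cvg_b : forall j, b_ x j @[x --> F] --> b j).

Lemma cvg_primal (u : 'cV[R]_p) : (forall j, a j = 0 -> u j 0 = 0) ->
  primal X y (a_ x) (b_ x) u @[x --> F] --> primal X y a b u.
Proof.
move=> a0_u0; apply: cvgD; first exact: cvg_cst.
apply: cvg_sum_ord => j; apply: cvg_mul_div => // /a0_u0 ->.
by rewrite expr2 mulr0.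
Qed.

Lemma cvg_dual (r : 'cV[R]_n) : (forall j, b j = 0 -> (X^T *m r) j 0 = 0) ->
  dual X y (a_ x) (b_ x) r @[x --> F] --> dual X y a b r.
Proof.
move=> b0_c0; apply: cvgB; first exact: cvg_cst.
apply: cvg_sum_ord => j; apply: cvg_mul_div => // /b0_c0 ->.
by rewrite expr2 mulr0.
Qed.

End DualityLimits.

Section RidgeFit.
Variables (R : realType) (n p : nat) (X : 'M[R]_(n, p)) (y : 'cV[R]_n) (delta : R).
Hypotheses (n_gt0 : (0 < n)%N) (delta_gt0 : 0 < delta).

Let inv_n_neq0 : n%:R^-1 != 0 :> R.
Proof. by rewrite invr_eq0 pnatr_eq0 gtn_eqF. Qed.

Definition ridge_weight (s : 'rV[R]_p) (j : 'I_p) : R := delta * (1 - s 0 j ^+ 2).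

Definition coef (t : 'rV[R]_p) : 'cV[R]_p := Tmat t *m beta_t X y delta t.

Definition resid (t : 'rV[R]_p) : 'cV[R]_n := y - X *m coef t.

Lemma ridge_weight_ge0 (s : 'rV[R]_p) j : 0 <= s 0 j <= 1 -> 0 <= ridge_weight s j.
Proof.
case/andP=> s_ge0 s_le1; rewrite pmulr_rge0 // subr_ge0 expr2.
exact: le_trans (ler_piMl s_ge0 s_le1) s_le1.
Qed.

Lemma ridge_weight_gt0 (s : 'rV[R]_p) j : 0 <= s 0 j < 1 -> 0 < ridge_weight s j.
Proof.
case/andP=> s_ge0 s_lt1; rewrite pmulr_rgt0 // subr_gt0 expr2.
exact: le_lt_trans (ler_piMl s_ge0 (ltW s_lt1)) s_lt1.
Qed.

Lemma Lt_gram (t : 'rV[R]_p) : (forall j, 0 <= t 0 j <= 1) ->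
  let N := col_mx (Xt X t) (diag_mx (\row_j Num.sqrt (ridge_weight t j))) in
  Lt X delta t = n%:R^-1 *: (N^T *m N).
Proof.
move=> t01 N; rewrite /Lt /N tr_col_mx mul_row_col tr_diag_mx; congr (_ *: (_ + _)).
apply/matrixP => i j; rewrite /Tmat !mul_diag_mx !mxE.
case: (i == j); last by rewrite !mulr0n !mulr0 subr0 mulr0.
by rewrite !mulr1n -expr2 sqr_sqrtr ?ridge_weight_ge0.
Qed.

Lemma Lt_sym (t : 'rV[R]_p) : (forall j, 0 <= t 0 j <= 1) -> (Lt X delta t)^T = Lt X delta t.
Proof. by move/Lt_gram => ->; rewrite linearZ /= trmx_mul trmxK. Qed.

Lemma Lt_ker (t : 'rV[R]_p) (w : 'cV[R]_p) : (forall j, 0 <= t 0 j <= 1) ->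
  Lt X delta t *m w = 0 -> Xt X t *m w = 0.
Proof.
move/Lt_gram => ->; set N := col_mx _ _.
rewrite -scalemxAl -(scaler0 _ n%:R^-1) => /(scalerI inv_n_neq0) NNw.
have /eqP : N *m w = 0.
  by apply: trmx_mul_self_eq0; rewrite trmx_mul -mulmxA (mulmxA N^T) NNw mulmx0.
by rewrite mul_col_mx col_mx_eq0 => /andP[/eqP].
Qed.

Lemma Lt_beta_t (t : 'rV[R]_p) : (forall j, 0 <= t 0 j <= 1) ->
  Lt X delta t *m beta_t X y delta t = n%:R^-1 *: ((Xt X t)^T *m y).
Proof.
move=> t01; rewrite /beta_t scalemxAr.
by rewrite mulmx_MP_pinv_tr ?Lt_sym // => w; exact: Lt_ker.
Qed.

Lemma coef_eq0 (t : 'rV[R]_p) j : t 0 j = 0 -> coef t j 0 = 0.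
Proof. by move=> t0; rewrite /coef /Tmat mul_diag_mx mxE t0 mul0r. Qed.

(* The normal equations [L_t b = X_t^T y / n] read [delta (1 - t_j^2) b_j = t_j (X^T r_t)_j];
   multiply by [t_j]. *)
Lemma coef_stationary (t : 'rV[R]_p) j : (forall j, 0 <= t 0 j <= 1) ->
  ridge_weight t j * coef t j 0 = t 0 j ^+ 2 * (X^T *m resid t) j 0.
Proof.
move=> t01; set b := beta_t X y delta t.
have XtT : (Xt X t)^T = Tmat t *m X^T by rewrite /Xt trmx_mul /Tmat tr_diag_mx.
have normal : delta *: (b - Tmat t *m (Tmat t *m b)) = Tmat t *m (X^T *m resid t).
  have := Lt_beta_t t01; rewrite -/b /Lt -scalemxAl => /(scalerI inv_n_neq0).
  rewrite mulmxDl -scalemxAl mulmxBl mul1mx -[Tmat t *m Tmat t *m b]mulmxA.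
  move=> /(canRL (addKr _)) ->.
  by rewrite /resid /coef -/b XtT /Xt !mulmxBr !mulmxA addrC.
move/(congr1 (fun v : 'cV[R]_p => t 0 j * v j 0)): normal.
rewrite /coef /ridge_weight -/b; move: b (X^T *m resid t) => b c.
rewrite /Tmat !mul_diag_mx !mxE => tj_eq.
by rewrite expr2 -[in RHS]mulrA -tj_eq; ring.
Qed.

Lemma resid_corr_eq0 (t : 'rV[R]_p) j : (forall j, 0 <= t 0 j <= 1) ->
  ridge_weight t j = 0 -> (X^T *m resid t) j 0 = 0.
Proof.
move=> t01 w0; have := coef_stationary j t01; rewrite w0 mul0r => /esym/eqP.
rewrite mulf_eq0 => /orP[|/eqP //]; move: w0 => /eqP.
by rewrite /ridge_weight mulf_eq0 gt_eqF //= subr_eq0 eq_sym => /eqP ->; rewrite oner_eq0.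
Qed.

Lemma f_lambda_resid lambda (t : 'rV[R]_p) :
  f_lambda X y delta lambda t = n%:R^-1 * sqnorm2 (resid t) + lambda * \sum_(j < p) t 0 j.
Proof. by rewrite /f_lambda /resid /coef /Xt mulmxA. Qed.

Definition duality_gap (s : 'rV[R]_p) (u : 'cV[R]_p) (r : 'cV[R]_n) : R :=
  primal X y (fun j => s 0 j ^+ 2) (ridge_weight s) u
  - dual X y (fun j => s 0 j ^+ 2) (ridge_weight s) r.

Lemma primal_coef (t : 'rV[R]_p) : (forall j, 0 <= t 0 j <= 1) ->
  primal X y (fun j => t 0 j ^+ 2) (ridge_weight t) (coef t)
  = dual X y (fun j => t 0 j ^+ 2) (ridge_weight t) (resid t).
Proof.
move=> t01; apply: strong_duality => j; last exact: coef_stationary.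
have [t0 | t_neq0] := eqVneq (t 0 j) 0; last by rewrite sqrf_eq0 t_neq0.
by rewrite /ridge_weight t0 expr2 mulr0 subr0 mulr1 (gt_eqF delta_gt0) orbC.
Qed.

Lemma duality_gap_coef (t : 'rV[R]_p) : (forall j, 0 <= t 0 j <= 1) ->
  duality_gap t (coef t) (resid t) = 0.
Proof. by move=> t01; rewrite /duality_gap primal_coef ?subrr. Qed.

(* Weak duality at [(u_s, r_t)] and at [(u_t, r_s)], glued by strong duality at [s]. *)
Lemma resid_dist_le_gap (s t : 'rV[R]_p) :
  (forall j, 0 <= s 0 j < 1) -> (forall j, s 0 j = 0 -> coef t j 0 = 0) ->
  sqnorm2 (resid s - resid t) <= duality_gap s (coef t) (resid t).
Proof.
move=> s01 supp_t.
have s_le1 j : 0 <= s 0 j <= 1 by case/andP: (s01 j) => -> /ltW.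
have a_ge0 j : 0 <= s 0 j ^+ 2 := sqr_ge0 _.
have b_gt0 j : 0 < ridge_weight s j := ridge_weight_gt0 (s01 j).
have sqr_supp (u : 'cV[R]_p) : (forall j, s 0 j = 0 -> u j 0 = 0) ->
    forall j, s 0 j ^+ 2 = 0 -> u j 0 = 0.
  by move=> supp_u j /eqP; rewrite sqrf_eq0 => /eqP /supp_u.
have := weak_duality X y (resid t) a_ge0 b_gt0 (sqr_supp _ (fun j => @coef_eq0 s j)).
rewrite primal_coef // -/(resid s) => le_st.
have := weak_duality X y (resid s) a_ge0 b_gt0 (sqr_supp _ supp_t).
rewrite /duality_gap => le_ts; apply: (le_trans le_st); rewrite lerD2r.
by rewrite -subr_ge0; exact: le_trans (sqnorm2_ge0 _) le_ts.
Qed.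

Section Limits.
Variables (T : Type) (F : set_system T) (s_ : T -> 'rV[R]_p) (t : 'rV[R]_p).
Hypotheses (FF : Filter F) (cvg_s : forall j, s_ x 0 j @[x --> F] --> t 0 j).

Lemma near_supp_coef :
  \forall x \near F, forall j, s_ x 0 j = 0 -> coef t j 0 = 0.
Proof.
apply: filter_forall => j; have [t0 | t_neq0] := eqVneq (t 0 j) 0.
  by apply: nearW => x _; exact: coef_eq0.
apply: filterS (cvgr_neq0 _ (@cvg_s j) t_neq0) => x s_neq0 s0.
by rewrite s0 eqxx in s_neq0.
Qed.

Lemma duality_gap_cvg : (forall j, 0 <= t 0 j <= 1) ->
  duality_gap (s_ x) (coef t) (resid t) @[x --> F] --> 0.
Proof.
move=> t01; rewrite -(duality_gap_coef t01).
have cvg_a j : s_ x 0 j ^+ 2 @[x --> F] --> t 0 j ^+ 2 by exact: cvg_sqr.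
have cvg_b j : ridge_weight (s_ x) j @[x --> F] --> ridge_weight t j.
  by apply: cvgMl_tmp; apply: cvgB; [exact: cvg_cst | exact: cvg_a].
apply: cvgB; [apply: cvg_primal | apply: cvg_dual] => // j.
  by move/eqP; rewrite sqrf_eq0 => /eqP; exact: coef_eq0.
exact: resid_corr_eq0.
Qed.

End Limits.

End RidgeFit.

Unset Implicit Arguments.

Theorem theorem3 (R : realType) (n p : nat) (hn : (0 < n)%N) (hp : (0 < p)%N)
  (X : 'M[R]_(n, p)) (y : 'cV[R]_n) (delta lambda : R)
  (hdelta : 0 < delta) (hlambda : 0 < lambda)
  (tseq : nat -> 'rV[R]_p) (t : 'rV[R]_p) :
  (forall l (j : 'I_p), 0 <= tseq l 0 j < 1) ->
  (forall j : 'I_p, 0 <= t 0 j <= 1) ->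
  tseq @ \oo --> t ->
  (fun l => f_lambda X y delta lambda (tseq l)) @ \oo
    --> f_lambda X y delta lambda t.
Proof.
move=> ts01 t01 cvg_ts.
have cvg_coord j : tseq l 0 j @[l --> \oo] --> t 0 j.
  exact: (continuous_cvg _ (@coord_continuous R 1 p 0 j t) cvg_ts).
have cvg_resid : sqnorm2 (resid X y delta (tseq l) - resid X y delta t) @[l --> \oo] --> 0.
  apply: squeeze_cvgr (cvg_cst 0) (duality_gap_cvg X y hn hdelta _ cvg_coord t01).
  near=> l; rewrite sqnorm2_ge0 (resid_dist_le_gap hn hdelta) //.
  by near: l; exact: near_supp_coef.
rewrite f_lambda_resid; under eq_fun do rewrite f_lambda_resid.
by apply: cvgD; apply: cvgMl_tmp; [exact: cvg_sqnorm2 | exact: cvg_sum_ord].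
Unshelve. all: by end_near. Qed.
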